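(* Let $G=\operatorname{GL}_m(q)$ and let $\ell\le m$ be a prime dividing $q-1$; let $\ell^b$ be the exact power of $\ell$ dividing $q-1$. Then there exists an $\ell$-element $t\in G$ such that $|G:C_G(t)|_\ell\ge\ell^b$, with strict inequality unless $(m,\ell)\in\{(2,2),(3,2)\}$. If moreover $m$ is not a power of $\ell$, then for any integer $0\le b'\le b$ such an element $t$ can be chosen to have determinant of order $\ell^{b'}$. *)

From mathcomp Require Import all_boot all_order all_fingroup all_solvable all_algebra.
Set Implicit Arguments. Unset Strict Implicit. Unset Printing Implicit Defensive.
Import GRing.Theory.

(* GL_m(q) is modelled as the full group [set: {'GL_m[F]}] for a finite
   field F with #|F| = q.  For m >= 1 (here m >= l >= 2), 'GL_m[F] is the
   group of invertible m x m matrices over F. *)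
Definition GLfull (m : nat) (F : finFieldType) : {set {'GL_m[F]}} :=
  [set: {'GL_m[F]}].

From mathcomp Require Import all_boot all_order all_fingroup all_solvable all_algebra all_field.
From mathcomp Require Import mxabelem zify.
Import GRing.Theory.

Set Implicit Arguments.
Unset Strict Implicit.
Unset Printing Implicit Defensive.

(* Let a generate the Sylow l-subgroup of F^*, of order l^b, and take N = l,
   or N = 4 when l = 2 and 4 | q - 1.  Then no a^d with 0 < d < N is an N-th
   power, so a matrix s in GL_N with s^N = a stabilises no proper nonzero
   subspace; its centraliser acts semiregularly on the nonzero vectors, and
   |C(s)| divides q^N - 1.  For t = diag(s, D) with D diagonal, no eigenvalue
   of D^N is a, hence C(t) = C(s) x C(D) and
     |GL_m : C(t)|_l >= |GL_m|_l / ((q^N - 1)_l |GL_(m-N)|_l).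
   The quotient |GL_m|_l / |GL_(m-N)|_l is a product of N consecutive factors
   (q^i - 1)_l; the one with N | i absorbs (q^N - 1)_l and the other N - 1 are
   at least l^b.  The first diagonal entry of D is free and prescribes det t.
   When l = 2 and q = 3 (mod 4) we take N = 2 and D = diag(-1,..,-1,1,..,1)
   with two or three entries -1, so that C(D) = GL_k x GL_r; the bound then
   comes from (q^4 - 1)_2 > (q^2 - 1)_2. *)

Lemma sum_sub_const (s : seq nat) (f : nat -> nat) c :
  (forall i, i \in s -> c <= f i) ->
  \sum_(i <- s) f i = size s * c + \sum_(i <- s) (f i - c).
Proof.
elim: s => [|x s IHs] le_cf; first by rewrite !big_nil.
rewrite !big_cons IHs => [|i si]; last by rewrite le_cf // inE si orbT.
by have := le_cf x (mem_head _ _); rewrite /=; lia.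
Qed.

Lemma leq_sum_sub_const (s js : seq nat) (f : nat -> nat) c :
  uniq js -> uniq s -> {subset js <= s} -> (forall i, i \in s -> c <= f i) ->
  \sum_(j <- js) (f j - c) + size s * c <= \sum_(i <- s) f i.
Proof.
move=> ujs us sub_js le_cf; rewrite (sum_sub_const le_cf) addnC leq_add2l.
exact: (@uniq_sub_le_big _ _ _ leqnn (fun x y => leq_addr y x)).
Qed.

Section LogGL.

Variables q l : nat.
Hypotheses (q_gt1 : 1 < q) (l_prime : prime l) (l_dvd : l %| q - 1).

Definition nu i := logn l (q ^ i - 1).
Definition nuGL n := \sum_(1 <= i < n.+1) nu i.

Lemma expn_sub1_gt0 i : 0 < i -> 0 < q ^ i - 1.
Proof.
by move=> i_gt0; rewrite subn_gt0 (leq_trans q_gt1) // -{1}(expn1 q) leq_exp2l.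
Qed.

Lemma nu_dvd d j : 0 < j -> d %| j -> nu d <= nu j.
Proof.
move=> j_gt0 /dvdnP[k def_j]; apply: dvdn_leq_log; first exact: expn_sub1_gt0.
by rewrite def_j mulnC expnM !subn1 dvdn_pred_predX.
Qed.

Lemma nu1_le i : 0 < i -> nu 1 <= nu i.
Proof. by move=> i_gt0; rewrite nu_dvd ?dvd1n. Qed.

Lemma nu1E : nu 1 = logn l (q - 1).
Proof. by rewrite /nu expn1. Qed.

Lemma logn_card_GL_formula n :
  logn l (q ^ 'C(n, 2) * \prod_(1 <= i < n.+1) (q ^ i - 1)) = nuGL n.
Proof.
have prod_gt0 k : 0 < \prod_(1 <= i < k.+1) (q ^ i - 1).
  by rewrite big_nat prodn_cond_gt0 // => i /andP[/expn_sub1_gt0].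
have coprime_lq : coprime l q.
  rewrite prime_coprime //; apply/negP => /dvdn_sub/(_ l_dvd).
  by rewrite subKn ?dvdn1 ?(ltnW q_gt1) // => /eqP l1; move: l_prime; rewrite l1.
rewrite logn_Gauss ?coprimeXr //.
elim: n => [|n IHn]; first by rewrite big_nil logn1 /nuGL big_nil.
by rewrite big_nat_recr //= lognM ?expn_sub1_gt0 // IHn /nuGL [RHS]big_nat_recr.
Qed.

Lemma nuGL0 : nuGL 0 = 0.
Proof. by rewrite /nuGL big_geq. Qed.

Lemma nuGLS n : nuGL n.+1 = nuGL n + nu n.+1.
Proof. by rewrite /nuGL big_nat_recr. Qed.

Lemma nuGL_add n N : nuGL (n + N) = nuGL n + \sum_(n.+1 <= i < (n + N).+1) nu i.
Proof. by rewrite /nuGL (@big_cat_nat _ _ _ n.+1) //; lia. Qed.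

Lemma nuGL_window n N : 0 < N -> nuGL n + nu N + (N - 1) * nu 1 <= nuGL (n + N).
Proof.
move=> N_gt0; pose j := N * (n %/ N).+1.
have in_j : n < j <= n + N by rewrite /j mulnS; have := divn_eq n N; have := ltn_pmod n N_gt0; nia.
have nuN : nu N <= nu j by apply: nu_dvd; rewrite ?dvdn_mulr //; lia.
rewrite nuGL_add -addnA leq_add2l.
have le_nu1 i : i \in index_iota n.+1 (n + N).+1 -> nu 1 <= nu i.
  by rewrite mem_index_iota => /andP[lt_ni _]; apply: nu1_le; apply: leq_trans lt_ni.
have sub_j : {subset [:: j] <= index_iota n.+1 (n + N).+1}.
  by move=> i; rewrite inE mem_index_iota => /eqP->.
have := leq_sum_sub_const (isT : uniq [:: j]) (iota_uniq _ _) sub_j le_nu1.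
rewrite big_seq1 /index_iota size_iota subSS addKn.
have := le_nu1 j (sub_j j (mem_head _ _)); nia.
Qed.

Lemma nuGL_window4 n : nuGL n + 2 * nu 1 + nu 2 + nu 4 <= nuGL (n + 4).
Proof.
pose j0 := n + 4 - n %% 4.
pose j2 := if n %% 4 < 2 then n + 2 - n %% 4 else n + 6 - n %% 4.
have in_j0 : n < j0 <= n + 4 by rewrite /j0; lia.
have in_j2 : n < j2 <= n + 4 by rewrite /j2; case: ifP; lia.
have j0_j2 : j0 != j2 by rewrite /j0 /j2; case: ifP; lia.
have nu4 : nu 4 <= nu j0 by apply: nu_dvd; rewrite /j0; lia.
have nu2 : nu 2 <= nu j2 by apply: nu_dvd; rewrite /j2; case: ifP; lia.
rewrite nuGL_add -!addnA leq_add2l.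
have le_nu1 i : i \in index_iota n.+1 (n + 4).+1 -> nu 1 <= nu i.
  by rewrite mem_index_iota => /andP[lt_ni _]; apply: nu1_le; apply: leq_trans lt_ni.
have sub_j : {subset [:: j0; j2] <= index_iota n.+1 (n + 4).+1}.
  by move=> i; rewrite !inE => /orP[]/eqP->; rewrite mem_index_iota.
have := leq_sum_sub_const _ (iota_uniq _ _) sub_j le_nu1.
rewrite /= inE j0_j2 big_cons big_seq1 /index_iota size_iota subSS addKn => /(_ isT).
have := le_nu1 j0 (sub_j j0 (mem_head _ _)).
have := le_nu1 j2 (sub_j j2 (mem_last j0 [:: j2])).
lia.
Qed.

Lemma nuGL_block_lower n N I :
  nuGL (N.+1 + n) <= I + nu N.+1 + nuGL n -> N * nu 1 <= I.
Proof. by rewrite [N.+1 + n]addnC; have := nuGL_window n (ltn0Sn N); lia. Qed.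

Section Two.

Hypothesis l2 : l = 2.

Lemma odd_q : odd q.
Proof.
by move: l_dvd; rewrite l2 dvdn2 oddB ?(ltnW q_gt1) // addbT negbK.
Qed.

Lemma nu2_lt_nu4 : nu 2 < nu 4.
Proof.
rewrite /nu; have -> : q ^ 4 - 1 = (q ^ 2 - 1) * (q ^ 2 + 1).
  have : 1 <= q ^ 2 by rewrite expn_gt0; lia.
  rewrite (_ : 4 = 2 * 2) // mulnC expnM; nia.
rewrite lognM ?expn_sub1_gt0 ?addn_gt0 ?orbT // -[X in X < _]addn0 ltn_add2l.
by rewrite logn_gt0 mem_primes l2 /= addn1 dvdn2 /= oddX odd_q.
Qed.

Lemma nu3E : nu 3 = nu 1.
Proof.
rewrite /nu; have -> : q ^ 3 - 1 = (q ^ 2 + q + 1) * (q - 1).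
  have : 1 <= q by lia.
  rewrite (_ : 3 = 1 + 2) // (_ : q ^ 2 = q * q) ?expnD ?expn1 ?mulnn //; nia.
by rewrite expn1 logn_Gauss // prime_coprime l2 // dvdn2 /= !oddD oddX odd_q.
Qed.

Lemma nuGL_signs_lower k r I : 1 < k < 4 ->
  nuGL (2 + (k + r)) <= I + nu 2 + (nuGL k + nuGL r) -> nu 1 < I.
Proof.
move=> /andP[k_gt1 k_lt4]; apply: contraTT; rewrite -leqNgt => le_I.
have := nuGL_window4 r; have := nu2_lt_nu4; have := nu1_le (isT : 0 < (r + 4).+1).
have nuGL3 : nuGL 3 = nu 1 + nu 2 + nu 3 by rewrite !nuGLS nuGL0.
have [-> | ->] : k = 2 \/ k = 3 by lia.
  rewrite (_ : 2 + (2 + r) = r + 4); last by lia.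
  rewrite !nuGLS nuGL0 -ltnNge; lia.
rewrite (_ : 2 + (3 + r) = (r + 4).+1); last by lia.
rewrite nuGL3 nuGLS nu3E -ltnNge; lia.
Qed.

End Two.

End LogGL.

Lemma semiregular_dvdn (aT : finGroupType) (D : {group aT}) (rT : finType)
    (to : action D rT) (H : {group aT}) (S : {set rT}) :
  H \subset D -> [acts H, on S | to] -> {in S, forall x, ('C_H[x | to] = 1)%g} ->
  #|H| %| #|S|.
Proof.
move=> sHD actsS regS; rewrite -(acts_sum_card_orbit actsS).
apply: dvdn_sum => _ /imsetP[x Sx ->].
by rewrite card_orbit_in // regS // indexg1.
Qed.

Section MatrixPowers.

Local Open Scope ring_scope.

Lemma intertwine_exp (R : pzRingType) m n (A : 'M[R]_m) (B : 'M[R]_n) Z k :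
  A *m Z = Z *m B -> A ^+ k *m Z = Z *m B ^+ k.
Proof.
move=> AZ; elim: k => [|k IHk]; first by rewrite !expr0 mul1mx mulmx1.
by rewrite !exprS -!mulmxE -mulmxA IHk !mulmxA AZ.
Qed.

Lemma diag_mxX (R : pzRingType) n (d : 'rV[R]_n) k :
  diag_mx d ^+ k = diag_mx (\row_j (d 0 j ^+ k)).
Proof.
elim: k => [|k IHk]; first by rewrite expr0; apply/matrixP => i j; rewrite !mxE expr0.
by rewrite exprS IHk -mulmxE mulmx_diag; congr diag_mx; apply/rowP => j; rewrite !mxE exprS.
Qed.

Lemma diag_mx_expr_eq1 (R : pzRingType) n (d : 'rV[R]_n) k :
  (forall j, d 0 j ^+ k = 1) -> diag_mx d ^+ k = 1.
Proof.
move=> dk; rewrite diag_mxX (_ : \row_j _ = const_mx 1) ?diag_const_mx //.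
by apply/rowP => j; rewrite !mxE dk.
Qed.

Lemma det_mxX (R : comPzRingType) n (A : 'M[R]_n) k : \det (A ^+ k) = \det A ^+ k.
Proof.
elim: k => [|k IHk]; first by rewrite !expr0 det1.
by rewrite !exprS -mulmxE det_mulmx IHk.
Qed.

Lemma unitmx_expr_eq1 (R : comUnitRingType) n (A : 'M[R]_n) k :
  (0 < k)%N -> A ^+ k = 1 -> A \in unitmx.
Proof. by move=> k_gt0 Ak; rewrite unitmxE -(unitrX_pos _ k_gt0) -det_mxX Ak det1 unitr1. Qed.

Lemma exists_mx_expr_scalar (R : comNzRingType) N (a : R) :
  exists s : 'M[R]_N.+1, s ^+ N.+1 = a%:M.
Proof.
pose p : {poly R} := 'X^(N.+1) - a%:P.
have p_monic : p \is monic by rewrite monicE lead_coefXnsubC.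
have size_p : size p = N.+2 by rewrite size_XnsubC.
have := companionmxK p_monic; move: (companionmx p); rewrite size_p => s char_s.
exists s; have := Cayley_Hamilton s.
by rewrite char_s rmorphB /= horner_mx_C rmorphXn /= horner_mx_X => /subr0_eq.
Qed.

Lemma block_diag_mxX (R : pzRingType) n1 n2 (A : 'M[R]_n1) (B : 'M[R]_n2) k :
  block_mx A 0 0 B ^+ k = block_mx (A ^+ k) 0 0 (B ^+ k).
Proof.
elim: k => [|k IHk]; first by rewrite !expr0 -scalar_mx_block.
by rewrite !exprS IHk -!mulmxE mulmx_block !mulmx0 !mul0mx !addr0 !add0r.
Qed.

End MatrixPowers.

Section GLMatrices.

Local Open Scope ring_scope.

Variable F : finFieldType.
Local Notation q := #|F|.

Definition centGL n (A : 'M[F]_n) :=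
  [set X : 'M[F]_n | (X \in unitmx) && (X *m A == A *m X)].

Lemma card_centGL_gt0 n (A : 'M[F]_n) : (0 < #|centGL A|)%N.
Proof. by apply/card_gt0P; exists 1%:M; rewrite inE unitmx1 mul1mx mulmx1 eqxx. Qed.

Lemma card_cent1_GL n (t : {'GL_n.+1[F]}) : #|'C[t]%g| = #|centGL (GLval t)|.
Proof.
rewrite -(card_imset _ val_inj); apply: eq_card => X; rewrite inE.
apply/imsetP/andP => [[u /cent1P/(congr1 val) tu ->]|[Xu /eqP tX]].
  by split; [exact: (valP u) | exact/eqP].
by exists (Sub X Xu); rewrite ?SubK //; apply/cent1P/val_inj.
Qed.

Lemma card_unitmx n :
  #|[set X : 'M[F]_n | X \in unitmx]| = (q ^ 'C(n, 2) * \prod_(1 <= i < n.+1) (q ^ i - 1))%N.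
Proof.
case: n => [|n].
  rewrite big_nil muln1 (_ : [set X | X \in unitmx] = setT) ?cardsT ?card_mx //.
  by apply/setP => X; rewrite !inE unitmxE det_mx00 unitr1.
rewrite -card_GL // -[RHS](card_imset _ val_inj); apply: eq_card => X.
rewrite inE; apply/idP/imsetP => [Xu|[u _ ->]]; last exact: (valP u).
by exists (Sub X Xu); rewrite ?inE ?SubK.
Qed.

Lemma card_centGL_dvd_unitmx n (A : 'M[F]_n) :
  A \in unitmx -> (#|centGL A| %| #|[set X : 'M[F]_n | X \in unitmx]|)%N.
Proof.
case: n A => [|n] A A_unit.
  rewrite (_ : centGL A = [set X | X \in unitmx]) //.
  by apply/setP => X; rewrite !inE [X *m A]flatmx0 [A *m X]flatmx0 eqxx andbT.
pose t : {'GL_n.+1[F]} := Sub A A_unit.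
have -> : centGL A = centGL (GLval t) by rewrite SubK.
by rewrite -card_cent1_GL card_unitmx -card_GL // cardSg ?subsetT.
Qed.

Lemma centGL_scalar n (c : F) : centGL (c%:M : 'M_n) = [set X | X \in unitmx].
Proof. by apply/setP => X; rewrite !inE scalar_mxC eqxx andbT. Qed.

Lemma card_centGL_block n1 n2 (A : 'M[F]_n1) (B : 'M[F]_n2) :
  (forall Z : 'M_(n1, n2), A *m Z = Z *m B -> Z = 0) ->
  (forall Y : 'M_(n2, n1), B *m Y = Y *m A -> Y = 0) ->
  #|centGL (block_mx A 0 0 B)| = (#|centGL A| * #|centGL B|)%N.
Proof.
move=> AB0 BA0; rewrite -cardsX.
pose blk (XY : 'M[F]_n1 * 'M[F]_n2) := block_mx XY.1 0 0 XY.2.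
have blk_inj : injective blk by move=> [X1 Y1] [X2 Y2] /eq_block_mx[/= -> _ _ ->].
rewrite -(card_imset _ blk_inj); apply: eq_card => M; rewrite inE.
apply/andP/imsetP => [[Mu /eqP cM] | [[X Y] /setXP[]]]; last first.
  rewrite !inE => /andP[Xu /eqP cX] /andP[Yu /eqP cY] ->.
  rewrite /blk /= block_diag_mx_unit Xu Yu !mulmx_block !mulmx0 !mul0mx !addr0 !add0r.
  by rewrite cX cY.
move: cM Mu; rewrite -[M]submxK !mulmx_block !mulmx0 !mul0mx !addr0 !add0r.
case/eq_block_mx => cX /esym/AB0 ur0 /esym/BA0 dl0 cY.
rewrite ur0 dl0 block_diag_mx_unit => /andP[Xu Yu].
by exists (ulsubmx M, drsubmx M); rewrite // !inE Xu Yu cX cY !eqxx.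
Qed.

Lemma intertwine_scalar_diag_eq0 n1 n2 (A : 'M[F]_n1) (d : 'rV[F]_n2) a k
    (Z : 'M_(n1, n2)) :
  A ^+ k = a%:M -> (forall j, d 0 j ^+ k != a) -> A *m Z = Z *m diag_mx d -> Z = 0.
Proof.
move=> Ak dk /(intertwine_exp k); rewrite Ak diag_mxX mul_scalar_mx mul_mx_diag.
move/matrixP => eZ; apply/matrixP => i j; move/eqP: (eZ i j); rewrite !mxE.
by rewrite mulrC -subr_eq0 -mulrBr mulf_eq0 subr_eq0 [a == _]eq_sym (negPf (dk j)) orbF => /eqP.
Qed.

Lemma intertwine_diag_scalar_eq0 n1 n2 (A : 'M[F]_n1) (d : 'rV[F]_n2) a k
    (Y : 'M_(n2, n1)) :
  A ^+ k = a%:M -> (forall j, d 0 j ^+ k != a) -> diag_mx d *m Y = Y *m A -> Y = 0.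
Proof.
move=> Ak dk /(intertwine_exp k); rewrite Ak diag_mxX mul_mx_scalar mul_diag_mx.
move/matrixP => eY; apply/matrixP => i j; move/eqP: (eY i j); rewrite !mxE.
by rewrite -subr_eq0 -mulrBl mulf_eq0 subr_eq0 (negPf (dk i)) => /eqP.
Qed.

(* If s ^+ N = a%:M stabilises a subspace of dimension d, the restriction S
   of s to it satisfies (\det S) ^+ N = a ^+ d. *)
Definition nonpower_powers N (a : F) :=
  forall d (y : F), (0 < d < N)%N -> y ^+ N != a ^+ d.

Lemma cent_fixed_eq1 N (s : 'M[F]_N) a (X : 'M_N) (v : 'rV_N) :
  s ^+ N = a%:M -> nonpower_powers N a ->
  X *m s = s *m X -> v != 0 -> v *m X = v -> X = 1%:M.
Proof.
move=> sN a_nonpow cXs v_neq0 vX; set K := kermx (X - 1%:M).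
have vK : (v <= K)%MS by rewrite sub_kermx mulmxBr mulmx1 vX subrr.
have [rankK | rankK] := eqVneq (\rank K) N.
  apply/eqP; rewrite -subr_eq0 -mxrank_eq0; move: rankK.
  by rewrite mxrank_ker => /(congr1 (subn N)); rewrite subKn ?rank_leq_row // subnn => /eqP.
have rankK_gt0 : (0 < \rank K)%N.
  by rewrite lt0n mxrank_eq0; apply: contraNneq v_neq0 => K0; rewrite -submx0 -K0.
have rankK_lt : (\rank K < N)%N by rewrite ltn_neqAle rankK rank_leq_col.
set B := row_base K.
have Bs_sub : (B *m s <= B)%MS.
  rewrite eq_row_base sub_kermx -mulmxA.
  have -> : s *m (X - 1%:M) = (X - 1%:M) *m s by rewrite mulmxBr mulmxBl mulmx1 mul1mx cXs.
  by rewrite mulmxA (eqP (_ : B *m (X - 1%:M) == 0)) ?mul0mx // -sub_kermx eq_row_base.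
have [S defBs] := submxP Bs_sub.
have /(intertwine_exp N) := esym defBs.
rewrite sN mul_mx_scalar -mul_scalar_mx => /(row_free_inj (row_base_free K)) SN.
have := a_nonpow (\rank K) (\det S); rewrite rankK_gt0 rankK_lt.
by rewrite -det_mxX SN det_scalar eqxx => /(_ isT).
Qed.

Lemma card_centGL_dvd N (s : 'M[F]_N.+1) a :
  s \in unitmx -> s ^+ N.+1 = a%:M -> nonpower_powers N.+1 a ->
  (#|centGL s| %| q ^ N.+1 - 1)%N.
Proof.
move=> s_unit sN a_nonpow; pose t : {'GL_N.+1[F]} := Sub s s_unit.
have -> : centGL s = centGL (GLval t) by rewrite SubK.
have -> : (q ^ N.+1 - 1 = #|[set~ (0%R : 'rV[F]_N.+1)]|)%N.
  by rewrite cardsC1 card_mx mul1n subn1.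
rewrite -card_cent1_GL; apply: (semiregular_dvdn (to := 'MR (GLrepr F N))).
- exact: subsetT.
- apply/subsetP => x _; rewrite !inE /=; apply/subsetP => v; rewrite !inE.
  rewrite mx_repr_actE ?inE //; apply: contra_neq => vx0.
  by rewrite -(mulmxK (GL_unitmx x) v) -[v *m val x]/(v *m _) vx0 mul0mx.
move=> v; rewrite !inE => v_neq0; apply/trivgP/subsetP => x /setIP[/cent1P ctx /astab1P].
rewrite /= mx_repr_actE ?inE // => vx; apply/eqP/val_inj.
by apply: (cent_fixed_eq1 sN a_nonpow _ v_neq0 vx); move/(congr1 val): ctx.
Qed.

End GLMatrices.

Section LPartRoots.

Local Open Scope ring_scope.

Variables (F : finFieldType) (l b : nat).
Hypotheses (l_prime : prime l) (l_dvd : (l %| #|F| - 1)%N).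
Hypothesis def_b : b = logn l (#|F| - 1).
Local Notation q := #|F|.

Lemma card_sub1_gt0 : (0 < q - 1)%N.
Proof. by rewrite subn_gt0 finNzRing_gt1. Qed.

Lemma expf_card_sub1 (y : F) : y != 0 -> y ^+ (q - 1) = 1.
Proof.
move=> y_neq0; apply: (mulIf y_neq0); rewrite mul1r -exprSr subn1.
by rewrite prednK ?expf_card // ltnW ?finNzRing_gt1.
Qed.

Lemma exists_prim_root_card : exists z : F, (q - 1).-primitive_root z.
Proof.
have /hasP[z _ z_prim] : has (q - 1).-primitive_root (enum (predC1 (0 : F))).
  apply: has_prim_root; first exact: card_sub1_gt0.
  - by apply/allP => x; rewrite mem_enum unity_rootE => /expf_card_sub1->.
  - exact: enum_uniq.
  by rewrite -cardE cardC1 subn1.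
by exists z.
Qed.

Lemma exists_prim_root_lpart : exists a : F, (l ^ b).-primitive_root a.
Proof.
have [z z_prim] := exists_prim_root_card.
by exists (z ^+ ((q - 1) %/ l ^ b)); rewrite dvdn_prim_root // def_b pfactor_dvdnn.
Qed.

Lemma lpart_gt0 : (0 < b)%N.
Proof. by rewrite def_b -(pfactor_dvdn 1 l_prime card_sub1_gt0) expn1. Qed.

Variable a : F.
Hypothesis a_prim : (l ^ b).-primitive_root a.

Lemma prim_lpart_neq0 : a != 0.
Proof.
apply/eqP => a0; move: (prim_expr_order a_prim); rewrite a0 expr0n expn_eq0.
by rewrite (negPf (lt0n_neq0 (prime_gt0 l_prime))) => /eqP; rewrite eq_sym oner_eq0.
Qed.

Lemma dvdn_lpow_root e d (y : F) :
  (e <= b)%N -> y ^+ (l ^ e) = a ^+ d -> (l ^ e %| d)%N.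
Proof.
move=> le_eb yea.
have y_neq0 : y != 0.
  apply/eqP => y0; move: yea; rewrite y0 expr0n expn_eq0 (negPf (lt0n_neq0 (prime_gt0 l_prime))).
  by move/eqP; rewrite eq_sym expf_eq0 (negPf prim_lpart_neq0) andbF.
have [k y_prim dvd_k] := prim_order_exists card_sub1_gt0 (expf_card_sub1 y_neq0).
have yb : y ^+ (l ^ b) = 1.
  have : (k %| l ^ (e + b))%N.
    rewrite (prim_order_dvd y_prim) expnD exprM yea -exprM mulnC exprM.
    by rewrite (prim_expr_order a_prim) expr1n.
  case/(dvdn_pfactor _ _ l_prime) => j _ def_k.
  apply/eqP; rewrite -(prim_order_dvd y_prim) def_k dvdn_exp2l //.
  by rewrite def_b -pfactor_dvdn ?card_sub1_gt0 // -def_k.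
have [i def_y] := prim_rootP a_prim yb.
move/eqP: yea; rewrite def_y -exprM (eq_prim_root_expr a_prim) => /eqP.
move/(congr1 (modn^~ (l ^ e)%N)); rewrite !modn_dvdm ?dvdn_exp2l // modnMl => /esym/eqP.
by rewrite -/(dvdn _ _).
Qed.

Lemma nonpower_powers_lpow e : (0 < e <= b)%N -> nonpower_powers (l ^ e) a.
Proof.
move=> /andP[_ le_eb] d y /andP[d_gt0 lt_d]; apply/eqP => /(dvdn_lpow_root le_eb).
by move/(dvdn_leq d_gt0); rewrite leqNgt lt_d.
Qed.

End LPartRoots.

Section BlockDiagonal.

Local Open Scope ring_scope.

Variables (F : finFieldType) (l : nat).
Hypotheses (l_prime : prime l) (l_dvd : (l %| #|F| - 1)%N).
Local Notation q := #|F|.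
Local Notation nu := (nu q l).
Local Notation nuGL := (nuGL q l).

Lemma GL_p_elt n E (t : {'GL_n.+1[F]}) : GLval t ^+ (l ^ E) = 1 -> (l.-elt t)%g.
Proof.
move=> tE; apply: (@pnat_dvd _ (l ^ E)); last by rewrite pnatX pnat_id.
by rewrite order_dvdn; apply/eqP/val_inj; rewrite /= FinRing.val_unitX tE.
Qed.

Lemma logn_card_unitmx n : logn l #|[set X : 'M[F]_n | X \in unitmx]| = nuGL n.
Proof. by rewrite card_unitmx logn_card_GL_formula // finNzRing_gt1. Qed.

Lemma logn_index_cent1_GL m (t : {'GL_m.+1[F]}) :
  (logn l #|GLfull m.+1 F : 'C_(GLfull m.+1 F)[t]|%g + logn l #|centGL (GLval t)|)%N
    = nuGL m.+1.
Proof.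
rewrite /GLfull setTI -card_cent1_GL addnC -lognM ?cardG_gt0 ?indexg_gt0 //.
rewrite Lagrange ?subsetT // -logn_card_unitmx card_unitmx -card_GL //.
Qed.

Lemma exists_GL_block_diag N n E (s : 'M[F]_N.+1) a (d : 'rV[F]_n) :
  (0 < N)%N -> s ^+ N.+1 = a%:M -> nonpower_powers N.+1 a ->
  s ^+ (l ^ E) = 1 -> diag_mx d ^+ (l ^ E) = 1 ->
  exists t : {'GL_(N.+1 + n)[F]},
    [/\ (l.-elt t)%g, \det (GLval t) = \det s * \det (diag_mx d) &
        (nuGL (N.+1 + n) <= logn l #|GLfull _ F : 'C_(GLfull _ F)[t]|%g
                             + nu N.+1 + logn l #|centGL (diag_mx d)|)%N].
Proof.
move=> N_gt0 sN a_nonpow sE dE.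
have lE_gt0 : (0 < l ^ E)%N by rewrite expn_gt0 prime_gt0.
have dN_neq_a j : d 0 j ^+ N.+1 != a by rewrite -[a]expr1 a_nonpow.
set T := block_mx s 0 0 (diag_mx d).
have TE : T ^+ (l ^ E) = 1.
  by rewrite block_diag_mxX sE dE; exact: (esym (scalar_mx_block _ _ 1)).
exists (Sub T (unitmx_expr_eq1 lE_gt0 TE)); split.
- by apply: (GL_p_elt (E := E)); rewrite SubK.
- by rewrite -(det_ublock s 0).
rewrite -[nuGL _](logn_index_cent1_GL (Sub T (unitmx_expr_eq1 lE_gt0 TE))).
rewrite -addnA leq_add2l SubK.
change (logn l #|centGL T| <= nu N.+1 + logn l #|centGL (diag_mx d)|)%N.
rewrite card_centGL_block; last 2 first.
- by move=> Z; apply: intertwine_scalar_diag_eq0 sN dN_neq_a.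
- by move=> Y; apply: intertwine_diag_scalar_eq0 sN dN_neq_a.
rewrite lognM ?card_centGL_gt0 // leq_add2r dvdn_leq_log ?expn_sub1_gt0 ?finNzRing_gt1 //.
exact: card_centGL_dvd (unitmx_expr_eq1 lE_gt0 sE) sN a_nonpow.
Qed.

End BlockDiagonal.

Section Construction.

Local Open Scope ring_scope.

Variables (F : finFieldType) (l b : nat) (a : F).
Hypotheses (l_prime : prime l) (l_dvd : (l %| #|F| - 1)%N).
Hypotheses (def_b : b = logn l (#|F| - 1)) (a_prim : (l ^ b).-primitive_root a).
Local Notation nuGL := (nuGL #|F| l).

Lemma exists_lelt_block_det m e (c : F) :
  (0 < e <= b)%N -> (l ^ e <= m)%N -> c ^+ (l ^ b) = 1 ->
  exists t : {'GL_m[F]},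
    [/\ (l.-elt t)%g, ((l ^ e).-1 * b <= logn l #|GLfull m F : 'C_(GLfull m F)[t]|%g)%N
      & (l ^ e < m)%N -> \det (GLval t) = c].
Proof.
move=> e_range le_m cb.
have [N def_N] : exists N, (N.+1 = l ^ e)%N.
  by exists (l ^ e).-1; rewrite prednK // expn_gt0 prime_gt0.
have N_gt0 : (0 < N)%N.
  by rewrite -ltnS def_N -[X in (X < _)%N](expn0 l) ltn_exp2l ?prime_gt1 //; case/andP: e_range.
have a_nonpow : nonpower_powers N.+1 a.
  by rewrite def_N; exact: (nonpower_powers_lpow l_prime def_b a_prim e_range).
rewrite -(subnKC le_m) -def_N /=; move: (m - N.+1)%N => n {le_m}.
have [s sN] := exists_mx_expr_scalar N a.
have sE : s ^+ (l ^ (e + b)) = 1.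
  by rewrite expnD -def_N exprM sN -rmorphXn /= (prim_expr_order a_prim).
have lE_gt0 : (0 < l ^ (e + b))%N by rewrite expn_gt0 prime_gt0.
have det_sE : \det s ^+ (l ^ (e + b)) = 1 by rewrite -det_mxX sE det1.
pose d : 'rV[F]_n := \row_j (if j == 0 :> nat then c / \det s else 1).
have dE : diag_mx d ^+ (l ^ (e + b)) = 1.
  apply: diag_mx_expr_eq1 => j; rewrite mxE; case: ifP => _; last exact: expr1n.
  by rewrite expr_div_n det_sE divr1 expnD mulnC exprM cb expr1n.
have [t [t_elt det_t bound]] := exists_GL_block_diag l_prime l_dvd N_gt0 sN a_nonpow sE dE.
exists t; split => // [|n_gt0].
  have le_cent : (logn l #|centGL (diag_mx d)| <= nuGL n)%N.
    rewrite -logn_card_unitmx // dvdn_leq_log ?card_centGL_dvd_unitmx //.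
      by rewrite -(centGL_scalar _ 1) card_centGL_gt0.
    exact: unitmx_expr_eq1 lE_gt0 dE.
  rewrite def_b -(nu1E #|F| l).
  apply: (nuGL_block_lower (finNzRing_gt1 F) l_prime l_dvd).
  by apply: leq_trans bound _; rewrite leq_add2l.
have {}n_gt0 : (0 < n)%N by rewrite -(ltn_add2l N.+1) addn0.
rewrite det_t det_diag /d; case: n {t_elt det_t bound t dE d} n_gt0 => // n _.
rewrite big_ord_recl big1 => [|j _]; last by rewrite mxE.
have s_neq0 : \det s != 0 by rewrite -unitfE -unitmxE (unitmx_expr_eq1 lE_gt0 sE).
by rewrite mxE /= mulr1 mulrC divfK.
Qed.

Section Two.

Hypotheses (l2 : (l = 2)%N) (b1 : (b = 1)%N).

Lemma prim_lpart_two_neq1 : a != 1.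
Proof.
have a_prim2 : 2.-primitive_root a by move: a_prim; rewrite l2 b1.
by apply/eqP => a1; have := prim_order_dvd a_prim2 1; rewrite a1 expr1 eqxx.
Qed.

Lemma prim_lpart_two : a = -1.
Proof.
move/eqP: (prim_expr_order a_prim); rewrite l2 b1 sqrf_eq1.
by rewrite (negPf prim_lpart_two_neq1) => /eqP.
Qed.

Lemma exists_GL_block_signs k r (s : 'M[F]_2) :
  (1 < k < 4)%N -> s ^+ 2 = a%:M ->
  exists t : {'GL_(2 + (k + r))[F]},
    [/\ (l.-elt t)%g, (b < logn l #|GLfull _ F : 'C_(GLfull _ F)[t]|%g)%N
      & \det (GLval t) = \det s * (-1) ^+ k].
Proof.
move=> k_range sN.
have a_nonpow : nonpower_powers 2 a.
  have := nonpower_powers_lpow l_prime def_b a_prim (_ : 0 < 1 <= b)%N.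
  by rewrite l2 b1; apply.
have sE : s ^+ (l ^ 2) = 1.
  by rewrite l2 (exprM s 2 2) sN -rmorphXn /= prim_lpart_two sqrrN expr1n.
pose d : 'rV[F]_(k + r) := row_mx (const_mx (-1)) (const_mx 1).
have dE : diag_mx d ^+ (l ^ 2) = 1.
  apply: diag_mx_expr_eq1 => j; rewrite mxE; case: splitP => j' _; rewrite mxE ?expr1n //.
  by rewrite -signr_odd l2.
have [t [t_elt det_t bound]] := exists_GL_block_diag l_prime l_dvd (ltn0Sn 0) sN a_nonpow sE dE.
have diag_d : diag_mx d = block_mx (diag_mx (const_mx (-1))) 0 0 (diag_mx (const_mx 1)).
  exact: diag_mx_row.
have m1_neq1 n (j : 'I_n) : (const_mx 1 : 'rV[F]_n) 0 j ^+ 1 != -1.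
  by rewrite mxE expr1 eq_sym -prim_lpart_two prim_lpart_two_neq1.
have m1E : diag_mx (const_mx (-1) : 'rV[F]_k) ^+ 1 = (-1)%:M by rewrite expr1 diag_const_mx.
have cent_d : logn l #|centGL (diag_mx d)| = (nuGL k + nuGL r)%N.
  rewrite diag_d card_centGL_block => [|Z|Y]; last 2 first.
  - exact: intertwine_scalar_diag_eq0 m1E (m1_neq1 _).
  - exact: intertwine_diag_scalar_eq0 m1E (m1_neq1 _).
  rewrite lognM ?card_centGL_gt0 // !diag_const_mx !centGL_scalar.
  by rewrite !logn_card_unitmx.
exists t; split => //.
  rewrite def_b -(nu1E #|F| l).
  apply: (nuGL_signs_lower (finNzRing_gt1 F) l_prime l_dvd l2 (r := r) k_range).
  by rewrite -cent_d.
by rewrite det_t diag_d det_ublock !diag_const_mx !det_scalar expr1n mulr1.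
Qed.

Lemma exists_lelt_block_det_two m (c : F) :
  (3 < m)%N -> c ^+ 2 = 1 ->
  exists t : {'GL_m[F]},
    [/\ (l.-elt t)%g, (b < logn l #|GLfull m F : 'C_(GLfull m F)[t]|%g)%N
      & (4 < m)%N -> \det (GLval t) = c].
Proof.
move=> m_gt3 c2.
have [s sN] := exists_mx_expr_scalar 1 a.
have det_s : \det s = c \/ \det s = - c.
  have : (\det s / c) ^+ 2 == 1.
    by rewrite expr_div_n -det_mxX sN det_scalar prim_lpart_two sqrrN !expr1n c2 divr1.
  have c_neq0 : c != 0 by apply: contra_eq_neq c2 => ->; rewrite expr0n eq_sym oner_eq0.
  by rewrite sqrf_eq1 => /orP[]/eqP/(canRL (divfK c_neq0))->; [left|right]; rewrite ?mulN1r ?mul1r.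
pose k := if (\det s == c) || (m == 4)%N then 2%N else 3%N.
have k_range : (1 < k < 4)%N by rewrite /k; case: ifP.
have le_km : (k.+2 <= m)%N by rewrite /k; case: ifP => [_|/norP[_ /eqP]]; lia.
rewrite -(subnKC le_km); have [t [t_elt t_large det_t]] := exists_GL_block_signs (m - k.+2) k_range sN.
exists t; split => // m_gt4; rewrite det_t /k.
have m_neq4 : (m == 4)%N = false by apply/eqP; lia.
case: det_s => ->; rewrite m_neq4 orbF ?eqxx; first by rewrite sqrrN expr1n mulr1.
by case: eqP => [-> | _]; rewrite ?sqrrN ?expr1n ?mulr1 // exprS sqrrN expr1n mulr1 mulrN1 opprK.
Qed.

End Two.

Lemma exists_lelt_large_index m (c : F) :
  (l <= m)%N -> c ^+ (l ^ b) = 1 ->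
  exists t : {'GL_m[F]},
    [/\ (l.-elt t)%g, (b <= logn l #|GLfull m F : 'C_(GLfull m F)[t]|%g)%N,
        ~ ((m, l) = (2, 2) \/ (m, l) = (3, 2))%N ->
          (b < logn l #|GLfull m F : 'C_(GLfull m F)[t]|%g)%N
      & (forall k, m <> l ^ k)%N -> \det (GLval t) = c].
Proof.
move=> le_lm cb; have b_gt0 : (0 < 1 <= b)%N := lpart_gt0 l_prime l_dvd def_b.
have [l2 | l_gt2] : (l = 2 \/ 2 < l)%N by have := prime_gt1 l_prime; lia.
  have [m_le3 | m_gt3] := leqP m 3.
    have exc : ((m, l) = (2, 2) \/ (m, l) = (3, 2))%N.
      have [->|->] : (m = 2 \/ m = 3)%N by lia.
        by left; rewrite l2.
      by right; rewrite l2.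
    have [t [t_elt le_t det_t]] := exists_lelt_block_det b_gt0 le_lm cb.
    exists t; split=> [//||/(_ exc)[]|not_pow]; first by move: le_t; rewrite l2 expn1; lia.
    by apply: det_t; have := not_pow 1; rewrite l2 expn1; lia.
  have [b1 | b_gt1] : (b = 1 \/ 1 < b)%N by lia.
    have c2 : c ^+ 2 = 1 by rewrite -cb l2 b1.
    have [t [t_elt lt_t det_t]] := exists_lelt_block_det_two l2 b1 m_gt3 c2.
    exists t; split=> // [|not_pow]; first exact: ltnW.
    by apply: det_t; have := not_pow 2; rewrite l2; lia.
  have le_4m : (l ^ 2 <= m)%N by rewrite l2.
  have [t [t_elt le_t det_t]] := exists_lelt_block_det (b_gt1 : 0 < 2 <= b)%N le_4m cb.
  rewrite l2 in t_elt le_t det_t *; exists t; split=> [//||_|not_pow]; try lia.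
  by apply: det_t; have := not_pow 2; lia.
have [t [t_elt le_t det_t]] := exists_lelt_block_det b_gt0 le_lm cb.
rewrite expn1 in le_t det_t; exists t; split=> [//||_|not_pow]; try nia.
by apply: det_t; have := not_pow 1; rewrite expn1; lia.
Qed.

End Construction.

Unset Implicit Arguments.

Theorem lemma3p7 (F : finFieldType) (m l b : nat)
  (hl : prime l) (hlm : l <= m) (hdiv : l %| #|F| - 1)
  (hb : b = logn l (#|F| - 1)) :
  (exists t : {'GL_m[F]},
     [/\ (l.-elt t)%g,
         l ^ b <= #|GLfull m F : 'C_(GLfull m F)[t]|%g`_l
       & ~ ((m, l) = (2, 2) \/ (m, l) = (3, 2)) ->
         l ^ b < #|GLfull m F : 'C_(GLfull m F)[t]|%g`_l])
  /\
  ((forall k : nat, m <> l ^ k) ->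
   forall b' : nat, b' <= b ->
   exists t : {'GL_m[F]},
     [/\ (l.-elt t)%g,
         l ^ b <= #|GLfull m F : 'C_(GLfull m F)[t]|%g`_l,
         ~ ((m, l) = (2, 2) \/ (m, l) = (3, 2)) ->
           l ^ b < #|GLfull m F : 'C_(GLfull m F)[t]|%g`_l
       & ((l ^ b').-primitive_root (\det (GLval t)))%R]).
Proof.
have [a a_prim] := exists_prim_root_lpart hb.
have large := exists_lelt_large_index hl hdiv hb a_prim hlm.
split.
  have [t [t_elt le_t lt_t _]] := large 1%R (expr1n _ _).
  by exists t; rewrite !p_part leq_exp2l ?ltn_exp2l ?prime_gt1.
move=> not_pow b' le_b'b; pose c := (a ^+ (l ^ b %/ l ^ b'))%R.
have cb : (c ^+ (l ^ b) = 1)%R by rewrite -exprM mulnC exprM (prim_expr_order a_prim) expr1n.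
have [t [t_elt le_t lt_t /(_ not_pow) det_t]] := large c cb.
exists t; rewrite !p_part leq_exp2l ?ltn_exp2l ?prime_gt1 // det_t.
by split => //; rewrite dvdn_prim_root // dvdn_exp2l.
Qed.
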